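(* Fix $N\ge 1$, $L>0$, $\alpha>0$, $p>0$, $\lambda_e>0$ and $\epsilon\in(0,1)$. Let $K_1=\pi\lambda_e\Gamma(\frac{2}{\alpha}+1)$, $K_4=\frac{N\left[(L/N)^\alpha+1\right]}{p}$, and $$R_e^{*}=\log_2\!\left[\frac{2p}{\alpha}\,W_0\!\left(\frac{\alpha}{2}\left[\frac{\ln\frac{1}{1-\epsilon}}{NK_1}\right]^{-\alpha/2}\right)+1\right].$$ Then the function $$\mathbb{U}(R_t)=\frac{(R_t-R_e^* )\exp\!\left[-K_4\left(2^{R_t}-1\right)\right]}{N},\qquad R_t>R_e^*,$$ is quasi-concave with unique maximizer $R_t^*=R_e^*+\frac{1}{\ln2}W_0\!\left(\frac{2^{-R_e^*}}{K_4}\right)$, and consequently the non-on-off-transmission throughput $\mathbb{U}_{\mathrm{NOFT}}=\mathcal{P}_cR_s/N$ is maximized over all $(R_t,R_s)$ with $R_t\ge R_s>0$ and $\mathcal{P}_{\mathrm{so}}\le\epsilon$ by $R_t=R_t^*$ and $$R_s=R_s^*=\frac{1}{\ln2}W_0\!\left(\frac{2^{-R_e^*}}{K_4}\right).$$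
   Context: Setup (linear multihop network). Source and destination are at distance $L$, connected by $N$ equal-length hops of length $L/N$. Fix path-loss exponent $\alpha>0$, transmitter-side SNR $p>0$, eavesdropper density $\lambda_e>0$. Legitimate hop $n$ has received SNR $\mathrm{SNR}_n=\frac{pH_n}{(L/N)^\alpha+1}$ with $H_n$ i.i.d. exponential of mean 1. For each hop $n$, eavesdroppers form independent homogeneous Poisson point processes $\Phi_{ne}$ of intensity $\lambda_e$ on $\mathbb{R}^2$; eavesdropper $e\in\Phi_{ne}$ has SNR $pS_{ne}/(|X_{ne}|^\alpha+1)$, with $|X_{ne}|$ its distance to the hop-$n$ transmitter and $S_{ne}$ i.i.d. Exp(1) independent of everything. Wiretap code rates $R_t\ge R_s>0$, $R_e=R_t-R_s$, $\beta_t=2^{R_t}-1$, $\beta_e=2^{R_e}-1$. The end-to-end secrecy outage probability is $\mathcal{P}_{\mathrm{so}}=\mathbb{P}(\max_n\max_{e\in\Phi_{ne}}\mathrm{SNR}_{ne}>\beta_e)=1-\exp[-NK_1(\beta_e/p)^{-2/\alpha}e^{-\beta_e/p}]$. Non-on-off transmission (NOFT): every hop always transmits; the end-to-end connection probability is $\mathcal{P}_c=\mathbb{P}(\min_n\mathrm{SNR}_n>\beta_t)=\exp[-N\beta_t((L/N)^\alpha+1)/p]$, and the secure transmission throughput is $\mathbb{U}_{\mathrm{NOFT}}=\mathcal{P}_cR_s/N$. $W_0$ denotes the principal branch of the Lambert W function. *)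

From Stdlib Require Import Reals Lra ClassicalEpsilon Factorial.
Open Scope R_scope.

(* Principal branch of the Lambert W function: for y >= -1/e, W0 y is the
   unique w >= -1 with w * exp w = y (chosen by Hilbert's epsilon). *)
Definition W0 (y : R) : R :=
  epsilon (inhabits 0) (fun w => -1 <= w /\ w * exp w = y).

Definition log2 (x : R) : R := ln x / ln 2.

(* Euler's limit formula for the Gamma function:
   Gamma x = lim_n n! n^x / (x (x+1) ... (x+n)),  x > 0. *)
Fixpoint rising_prod (x : R) (n : nat) : R :=
  match n with
  | O => x
  | S m => rising_prod x m * (x + INR (S m))
  end.

Definition Gamma_seq (x : R) (n : nat) : R :=
  INR (fact n) * Rpower (INR n) x / rising_prod x n.

Definition is_Gamma (x g : R) : Prop := Un_cv (Gamma_seq x) g.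

Definition K4 (N : nat) (L alpha p : R) : R :=
  INR N * (Rpower (L / INR N) alpha + 1) / p.

Definition Re_star (N : nat) (alpha p K1 eps : R) : R :=
  log2 (2 * p / alpha *
        W0 (alpha / 2 * Rpower (ln (1 / (1 - eps)) / (INR N * K1)) (- alpha / 2))
        + 1).

Definition U_fun (N : nat) (L alpha p K1 eps Rt : R) : R :=
  (Rt - Re_star N alpha p K1 eps)
  * exp (- K4 N L alpha p * (Rpower 2 Rt - 1)) / INR N.

(* end-to-end secrecy outage probability, beta_e = 2^{Rt-Rs} - 1.
   For beta_e = 0 (R_t = R_s) the outage probability equals 1
   (limit of the closed form as beta_e -> 0+). *)
Definition P_so (N : nat) (alpha p K1 Rt Rs : R) : R :=
  let be := Rpower 2 (Rt - Rs) - 1 in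
  if Rlt_dec 0 be then
    1 - exp (- INR N * K1 * Rpower (be / p) (- (2 / alpha)) * exp (- (be / p)))
  else 1.

Definition P_c (N : nat) (L alpha p Rt : R) : R :=
  exp (- INR N * (Rpower 2 Rt - 1) * (Rpower (L / INR N) alpha + 1) / p).

Definition U_NOFT (N : nat) (L alpha p Rt Rs : R) : R :=
  P_c N L alpha p Rt * Rs / INR N.

Definition quasi_concave_on (D : R -> Prop) (f : R -> R) : Prop :=
  forall x y t, D x -> D y -> 0 <= t <= 1 ->
    Rmin (f x) (f y) <= f (t * x + (1 - t) * y).

From Stdlib Require Import Reals Lra Lia ClassicalEpsilon Factorial.
Open Scope R_scope.

(* With G(R_t) = ln (R_t - R_e^* ) - K4 2^{R_t}, the throughput is U = exp (G + K4) / N,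
   and G is strictly concave: ln is concave and 2^{R_t} strictly convex, so G lies strictly
   below each of its tangents away from the point of contact.  Hence U is quasi-concave
   and its unique maximiser is the zero of G'(R_t) = 1/(R_t - R_e^* ) - K4 ln 2 2^{R_t},
   which after the substitution w = (R_t - R_e^* ) ln 2 is the equation w e^w = 2^{-R_e^*}/K4,
   solved by W0.  On the other side, the outage probability decreases in
   beta_e = 2^{R_t - R_s} - 1, through the decreasing map b |-> b^{-2/alpha} e^{-b/p},
   so the constraint P_so <= eps reads R_t - R_s >= R_e^*, where equality is attained
   exactly at the W0 formula defining R_e^*.  Since the connection probability only
   depends on R_t, the best secrecy rate for a given R_t is R_t - R_e^*, which reduces
   the throughput maximisation to that of U. *)

Lemma ln_le_sub1 z : 0 < z -> ln z <= z - 1.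
Proof. intro Hz. pose proof (exp_ineq1_le (ln z)) as Hexp. rewrite exp_ln in Hexp; lra. Qed.

Lemma ln_lt_sub1 z : 0 < z -> z <> 1 -> ln z < z - 1.
Proof.
  intros Hz H1. assert (Hln : ln z <> 0) by (apply ln_neq_0; assumption).
  pose proof (exp_ineq1 _ Hln) as Hexp. rewrite exp_ln in Hexp; lra.
Qed.

Lemma ln2_pos : 0 < ln 2.
Proof. pose proof ln_lt_2. lra. Qed.

Lemma Rpower2_pos x : 0 < Rpower 2 x.
Proof. apply exp_pos. Qed.

Lemma Rpower2_le_iff x y : Rpower 2 x <= Rpower 2 y <-> x <= y.
Proof.
  split; intro H.
  - destruct (Rle_or_lt x y) as [|Hlt]; [assumption|].
    pose proof (Rpower_lt 2 y x ltac:(lra) Hlt). lra.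
  - apply Rle_Rpower; lra.
Qed.

Lemma W0_pos_spec y : 0 < y -> 0 < W0 y /\ W0 y * exp (W0 y) = y.
Proof.
  intro Hy.
  assert (Hex : exists w, -1 <= w /\ w * exp w = y).
  { destruct (IVT (fun w => w * exp w - y) 0 y) as [w [Hw0 Hw]].
    - apply continuity_minus; [|apply continuity_const; intros ? ?; reflexivity].
      apply continuity_mult; apply derivable_continuous;
        [apply derivable_id | apply derivable_exp].
    - exact Hy.
    - rewrite Rmult_0_l. lra.
    - pose proof (exp_ineq1 y ltac:(lra)).
      assert (0 < y * (exp y - 1)) by (apply Rmult_lt_0_compat; lra). lra.
    - exists w. split; lra. }
  destruct (epsilon_spec (inhabits 0) _ Hex) as [_ Hw].
  unfold W0. split; [|exact Hw].
  pose proof (exp_pos (epsilon (inhabits 0) (fun w => -1 <= w /\ w * exp w = y))).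
  nra.
Qed.

(** * Positivity of Gamma *)

Lemma rising_prod_pos x n : 0 < x -> 0 < rising_prod x n.
Proof.
  intro Hx. induction n as [|n IH]; cbn [rising_prod]; [lra|].
  pose proof (pos_INR (S n)). nra.
Qed.

(* ln (a + 1) - ln a >= 1 / (a + 1), then exponentiate. *)
Lemma Rpower_succ_ge a x : 0 < a -> 0 <= x ->
  Rpower a x * (1 + x / (a + 1)) <= Rpower (a + 1) x.
Proof.
  intros Ha Hx.
  set (d := ln (a + 1) - ln a).
  assert (Hd : / (a + 1) <= d).
  { assert (Hq : 0 < a / (a + 1)) by (apply Rdiv_lt_0_compat; lra).
    pose proof (ln_le_sub1 _ Hq) as Hle.
    unfold Rdiv in Hle. rewrite ln_mult, ln_Rinv in Hle by (try apply Rinv_0_lt_compat; lra).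
    replace (a * / (a + 1) - 1) with (- / (a + 1)) in Hle by (field; lra).
    unfold d. lra. }
  assert (Hsplit : Rpower (a + 1) x = Rpower a x * exp (x * d)).
  { unfold Rpower, d. rewrite <- exp_plus. f_equal. ring. }
  rewrite Hsplit. apply Rmult_le_compat_l; [left; apply exp_pos|].
  pose proof (exp_ineq1_le (x * d)).
  assert (x * / (a + 1) <= x * d) by (apply Rmult_le_compat_l; lra).
  unfold Rdiv. lra.
Qed.

Lemma Gamma_seq_pos x n : 0 < x -> 0 < Gamma_seq x n.
Proof.
  intro Hx. unfold Gamma_seq, Rdiv.
  apply Rmult_lt_0_compat; [|apply Rinv_0_lt_compat, rising_prod_pos; exact Hx].
  apply Rmult_lt_0_compat; [apply INR_fact_lt_0 | apply exp_pos].
Qed.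

Lemma Gamma_seq_le_succ x n : 0 < x -> (1 <= n)%nat ->
  Gamma_seq x n <= Gamma_seq x (S n).
Proof.
  intros Hx Hn. unfold Gamma_seq.
  change (rising_prod x (S n)) with (rising_prod x n * (x + INR (S n))).
  change (fact (S n)) with (S n * fact n)%nat.
  rewrite mult_INR, S_INR.
  assert (Hn0 : 0 < INR n) by (apply lt_0_INR; lia).
  pose proof (INR_fact_lt_0 n) as HF. pose proof (rising_prod_pos x n Hx) as Hr.
  pose proof (Rpower_succ_ge (INR n) x Hn0 ltac:(lra)) as Hpow.
  set (F := INR (fact n)) in *. set (r := rising_prod x n) in *.
  set (A := Rpower (INR n) x) in *. set (B := Rpower (INR n + 1) x) in *.
  replace (F * A / r)
    with ((INR n + 1) * F * (A * (1 + x / (INR n + 1))) / (r * (x + (INR n + 1))))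
    by (field; lra).
  unfold Rdiv. apply Rmult_le_compat_r; [left; apply Rinv_0_lt_compat; nra|].
  apply Rmult_le_compat_l; nra.
Qed.

Lemma Gamma_pos x g : 0 < x -> is_Gamma x g -> 0 < g.
Proof.
  intros Hx Hg.
  assert (Hmono : forall n, (1 <= n)%nat -> Gamma_seq x 1 <= Gamma_seq x n).
  { induction n as [|n IH]; intro Hn; [lia|].
    destruct (Nat.eq_dec n 0) as [->|Hn0]; [lra|].
    pose proof (Gamma_seq_le_succ x n Hx ltac:(lia)). specialize (IH ltac:(lia)). lra. }
  pose proof (Gamma_seq_pos x 1 Hx).
  destruct (Rlt_or_le 0 g) as [|Hle]; [assumption|exfalso].
  destruct (Hg (Gamma_seq x 1 - g)) as [M HM]; [lra|].
  specialize (HM (max M 1) (Nat.le_max_l _ _)). unfold R_dist in HM.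
  specialize (Hmono (max M 1) (Nat.le_max_r _ _)).
  pose proof (RRle_abs (Gamma_seq x (max M 1) - g)). lra.
Qed.

(** * Concavity of the log-throughput *)

Lemma ln_lt_tangent a b : 0 < a -> 0 < b -> b <> a -> ln b < ln a + (b - a) / a.
Proof.
  intros Ha Hb Hne.
  assert (Hq : 0 < b / a) by (apply Rdiv_lt_0_compat; lra).
  assert (Hq1 : b / a <> 1).
  { intro E. apply Hne. apply (Rmult_eq_reg_r (/ a)); [|apply Rinv_neq_0_compat; lra].
    fold (b / a). rewrite E. field. lra. }
  pose proof (ln_lt_sub1 _ Hq Hq1) as Hlt.
  unfold Rdiv in Hlt. rewrite ln_mult, ln_Rinv in Hlt by (try apply Rinv_0_lt_compat; lra).
  replace (b * / a - 1) with ((b - a) / a) in Hlt by (field; lra). lra.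
Qed.

Lemma Rpower2_gt_tangent m x : x <> m -> Rpower 2 m * (1 + (x - m) * ln 2) < Rpower 2 x.
Proof.
  intro Hne. pose proof ln2_pos.
  assert (Hsplit : Rpower 2 x = Rpower 2 m * exp ((x - m) * ln 2)).
  { unfold Rpower. rewrite <- exp_plus. f_equal. ring. }
  rewrite Hsplit. apply Rmult_lt_compat_l; [apply Rpower2_pos|].
  apply exp_ineq1. intro E. apply Rmult_integral in E. destruct E; lra.
Qed.

Lemma convex_comb_gt r0 x y t : r0 < x -> r0 < y -> 0 <= t <= 1 ->
  r0 < t * x + (1 - t) * y.
Proof.
  intros Hx Hy Ht.
  replace (t * x + (1 - t) * y) with (r0 + (t * (x - r0) + (1 - t) * (y - r0))) by ring.
  destruct (Req_dec t 0) as [->|Ht0]; [lra|].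
  assert (0 < t * (x - r0)) by (apply Rmult_lt_0_compat; lra).
  assert (0 <= (1 - t) * (y - r0)) by (apply Rmult_le_pos; lra). lra.
Qed.

Section LogThroughput.

Variables r0 K : R.
Hypothesis HK : 0 < K.

Definition log_throughput r := ln (r - r0) - K * Rpower 2 r.

Definition log_throughput_slope m := / (m - r0) - K * ln 2 * Rpower 2 m.

Lemma log_throughput_lt_tangent x m : r0 < x -> r0 < m -> x <> m ->
  log_throughput x < log_throughput m + log_throughput_slope m * (x - m).
Proof.
  intros Hx Hm Hne. unfold log_throughput, log_throughput_slope.
  pose proof (ln_lt_tangent (m - r0) (x - r0) ltac:(lra) ltac:(lra) ltac:(lra)).
  pose proof (Rpower2_gt_tangent m x Hne).
  replace ((x - r0 - (m - r0)) / (m - r0)) with (/ (m - r0) * (x - m)) in H by (field; lra).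
  nra.
Qed.

Lemma log_throughput_le_tangent x m : r0 < x -> r0 < m ->
  log_throughput x <= log_throughput m + log_throughput_slope m * (x - m).
Proof.
  intros Hx Hm. destruct (Req_dec x m) as [->|Hne].
  - rewrite Rminus_diag, Rmult_0_r, Rplus_0_r. apply Rle_refl.
  - left. apply log_throughput_lt_tangent; assumption.
Qed.

Lemma log_throughput_concave x y t : r0 < x -> r0 < y -> 0 <= t <= 1 ->
  t * log_throughput x + (1 - t) * log_throughput y
  <= log_throughput (t * x + (1 - t) * y).
Proof.
  intros Hx Hy Ht. set (m := t * x + (1 - t) * y).
  pose proof (convex_comb_gt r0 x y t Hx Hy Ht) as Hm.
  pose proof (log_throughput_le_tangent x m Hx Hm) as Tx.
  pose proof (log_throughput_le_tangent y m Hy Hm) as Ty.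
  apply (Rmult_le_compat_l t) in Tx; [|lra].
  apply (Rmult_le_compat_l (1 - t)) in Ty; [|lra].
  assert (E : t * (x - m) + (1 - t) * (y - m) = 0) by (unfold m; ring).
  set (s := log_throughput_slope m) in *. nra.
Qed.

Lemma log_throughput_strict_max m : r0 < m -> log_throughput_slope m = 0 ->
  forall x, r0 < x -> x <> m -> log_throughput x < log_throughput m.
Proof.
  intros Hm Hslope x Hx Hne.
  pose proof (log_throughput_lt_tangent x m Hx Hm Hne). rewrite Hslope in H. lra.
Qed.

Lemma log_throughput_slope_W0 :
  log_throughput_slope (r0 + W0 (Rpower 2 (- r0) / K) / ln 2) = 0.
Proof.
  pose proof ln2_pos.
  assert (Hy : 0 < Rpower 2 (- r0) / K) by (apply Rdiv_lt_0_compat; [apply Rpower2_pos|lra]).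
  destruct (W0_pos_spec _ Hy) as [Hw Ew].
  set (w := W0 (Rpower 2 (- r0) / K)) in *.
  unfold log_throughput_slope.
  replace (r0 + w / ln 2 - r0) with (w / ln 2) by ring.
  assert (E2 : Rpower 2 (r0 + w / ln 2) = / (K * w)).
  { rewrite Rpower_plus. unfold Rpower at 2.
    replace (w / ln 2 * ln 2) with w by (field; lra).
    replace (exp w) with (Rpower 2 (- r0) / K / w) by (rewrite <- Ew; field; lra).
    rewrite Rpower_Ropp. field. split; [lra|]. split; [lra|].
    apply Rgt_not_eq, Rpower2_pos. }
  rewrite E2. field. lra.
Qed.

End LogThroughput.

Lemma quasi_concave_of_concave_comp (D : R -> Prop) (f G h : R -> R) :
  (forall x y t, D x -> D y -> 0 <= t <= 1 ->
     t * G x + (1 - t) * G y <= G (t * x + (1 - t) * y)) ->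
  (forall a b, a <= b -> h a <= h b) ->
  (forall x, D x -> f x = h (G x)) ->
  (forall x y t, D x -> D y -> 0 <= t <= 1 -> D (t * x + (1 - t) * y)) ->
  quasi_concave_on D f.
Proof.
  intros Hconc Hmono Hf HD x y t Hx Hy Ht.
  pose proof (Hconc x y t Hx Hy Ht) as Hc.
  rewrite (Hf x Hx), (Hf y Hy), (Hf _ (HD x y t Hx Hy Ht)).
  destruct (Rle_or_lt (G x) (G y)).
  - apply Rle_trans with (h (G x)); [apply Rmin_l|]. apply Hmono.
    assert (0 <= (1 - t) * (G y - G x)) by (apply Rmult_le_pos; lra). lra.
  - apply Rle_trans with (h (G y)); [apply Rmin_r|]. apply Hmono.
    assert (0 <= t * (G x - G y)) by (apply Rmult_le_pos; lra). lra.
Qed.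

(** * The secrecy outage constraint *)

Definition outage_kernel (alpha p b : R) : R :=
  Rpower (b / p) (- (2 / alpha)) * exp (- (b / p)).

Lemma outage_kernel_decreasing alpha p b1 b2 : 0 < alpha -> 0 < p -> 0 < b1 < b2 ->
  outage_kernel alpha p b2 < outage_kernel alpha p b1.
Proof.
  intros Ha Hp Hb. unfold outage_kernel, Rpower.
  assert (Hq : b1 / p < b2 / p) by (apply Rmult_lt_compat_r; [apply Rinv_0_lt_compat|]; lra).
  assert (Hq1 : 0 < b1 / p) by (apply Rdiv_lt_0_compat; lra).
  pose proof (ln_increasing _ _ Hq1 Hq).
  assert (0 < 2 / alpha) by (apply Rdiv_lt_0_compat; lra).
  apply Rmult_le_0_lt_compat; try (left; apply exp_pos); apply exp_increasing; nra.
Qed.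

Lemma outage_kernel_le_iff alpha p b1 b2 : 0 < alpha -> 0 < p -> 0 < b1 -> 0 < b2 ->
  outage_kernel alpha p b2 <= outage_kernel alpha p b1 <-> b1 <= b2.
Proof.
  intros Ha Hp Hb1 Hb2. split; intro H.
  - destruct (Rle_or_lt b1 b2) as [|Hlt]; [assumption|].
    pose proof (outage_kernel_decreasing alpha p b2 b1 Ha Hp (conj Hb2 Hlt)). lra.
  - destruct (Req_dec b1 b2) as [->|Hne]; [lra|].
    left. apply outage_kernel_decreasing; lra.
Qed.

Lemma outage_kernel_W0 alpha p D : 0 < alpha -> 0 < p -> 0 < D ->
  outage_kernel alpha p (2 * p / alpha * W0 (alpha / 2 * Rpower D (- alpha / 2))) = D.
Proof.
  intros Ha Hp HD.
  assert (Hy : 0 < alpha / 2 * Rpower D (- alpha / 2)).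
  { apply Rmult_lt_0_compat; [lra|apply exp_pos]. }
  destruct (W0_pos_spec _ Hy) as [Hw Ew].
  set (w := W0 (alpha / 2 * Rpower D (- alpha / 2))) in *.
  unfold outage_kernel.
  replace (2 * p / alpha * w / p) with (2 / alpha * w) by (field; lra).
  assert (Eln : ln (2 / alpha * w) + w = - alpha / 2 * ln D).
  { assert (H2w : 0 < 2 / alpha * w) by (apply Rmult_lt_0_compat; [apply Rdiv_lt_0_compat|]; lra).
    rewrite <- (ln_exp w) at 2. rewrite <- ln_mult by (auto using exp_pos).
    rewrite Rmult_assoc, Ew.
    replace (2 / alpha * (alpha / 2 * Rpower D (- alpha / 2))) with (Rpower D (- alpha / 2))
      by (field; lra).
    apply ln_Rpower. }
  unfold Rpower at 1. rewrite <- exp_plus.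
  replace (- (2 / alpha) * ln (2 / alpha * w) + - (2 / alpha * w))
    with (- (2 / alpha) * (ln (2 / alpha * w) + w)) by ring.
  rewrite Eln. replace (- (2 / alpha) * (- alpha / 2 * ln D)) with (ln D) by (field; lra).
  apply exp_ln; assumption.
Qed.

Section OutageConstraint.

Variables (N : nat) (alpha p K1 eps : R).
Hypotheses (HN : (1 <= N)%nat) (Halpha : 0 < alpha) (Hp : 0 < p) (HK1 : 0 < K1)
  (Heps : 0 < eps < 1).

(* The paper's beta_e^*, so that R_e^* = log2 (beta_e^* + 1). *)
Definition outage_threshold : R :=
  2 * p / alpha *
  W0 (alpha / 2 * Rpower (ln (1 / (1 - eps)) / (INR N * K1)) (- alpha / 2)).

Let D := ln (1 / (1 - eps)) / (INR N * K1).

Lemma outage_budget_pos : 0 < D.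
Proof.
  assert (0 < INR N) by (apply lt_0_INR; lia).
  apply Rdiv_lt_0_compat; [|nra].
  rewrite <- ln_1. apply ln_increasing; [lra|].
  apply (Rmult_lt_reg_r (1 - eps)); [lra|]. field_simplify; lra.
Qed.

Lemma outage_threshold_pos : 0 < outage_threshold.
Proof.
  assert (Hy : 0 < alpha / 2 * Rpower D (- alpha / 2)).
  { apply Rmult_lt_0_compat; [lra|apply exp_pos]. }
  destruct (W0_pos_spec _ Hy) as [Hw _].
  unfold outage_threshold. apply Rmult_lt_0_compat; [|exact Hw].
  apply Rdiv_lt_0_compat; lra.
Qed.

Lemma Rpower2_Re_star : Rpower 2 (Re_star N alpha p K1 eps) = outage_threshold + 1.
Proof.
  pose proof ln2_pos. pose proof outage_threshold_pos.
  change (Re_star N alpha p K1 eps) with (log2 (outage_threshold + 1)).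
  unfold log2, Rpower.
  replace (ln (outage_threshold + 1) / ln 2 * ln 2) with (ln (outage_threshold + 1))
    by (field; lra).
  apply exp_ln. lra.
Qed.

Lemma Re_star_pos : 0 < Re_star N alpha p K1 eps.
Proof.
  apply Rnot_le_lt. intro Hle.
  apply (proj2 (Rpower2_le_iff _ 0)) in Hle.
  rewrite Rpower2_Re_star, Rpower_O in Hle by lra.
  pose proof outage_threshold_pos. lra.
Qed.

Lemma P_so_le_eps_iff Rt Rs :
  P_so N alpha p K1 Rt Rs <= eps <-> Re_star N alpha p K1 eps <= Rt - Rs.
Proof.
  pose proof outage_threshold_pos as Hth.
  assert (HN0 : 0 < INR N) by (apply lt_0_INR; lia).
  assert (HNK : 0 < INR N * K1) by (apply Rmult_lt_0_compat; assumption).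
  rewrite <- (Rpower2_le_iff (Re_star N alpha p K1 eps)), Rpower2_Re_star. unfold P_so; cbv zeta.
  assert (Hshift : outage_threshold + 1 <= Rpower 2 (Rt - Rs)
                   <-> outage_threshold <= Rpower 2 (Rt - Rs) - 1) by lra.
  rewrite Hshift. set (be := Rpower 2 (Rt - Rs) - 1).
  destruct (Rlt_dec 0 be) as [Hbe|Hbe]; [|split; intro; lra].
  rewrite <- (outage_kernel_le_iff alpha p outage_threshold be) by assumption.
  unfold outage_threshold. fold D. rewrite outage_kernel_W0 by (auto using outage_budget_pos).
  replace (- INR N * K1 * Rpower (be / p) (- (2 / alpha)) * exp (- (be / p)))
    with (- (INR N * K1 * outage_kernel alpha p be)) by (unfold outage_kernel; ring).
  assert (Hc : exp (- (INR N * K1 * D)) = 1 - eps).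
  { unfold D. replace (INR N * K1 * (ln (1 / (1 - eps)) / (INR N * K1)))
      with (ln (1 / (1 - eps))) by (field; lra).
    rewrite exp_Ropp, exp_ln by (apply Rdiv_lt_0_compat; lra). field. lra. }
  split; intro H.
  - destruct (Rle_or_lt (outage_kernel alpha p be) D) as [|Hlt]; [assumption|].
    assert (exp (- (INR N * K1 * outage_kernel alpha p be)) < exp (- (INR N * K1 * D)))
      by (apply exp_increasing, Ropp_lt_contravar, Rmult_lt_compat_l; assumption).
    lra.
  - assert (exp (- (INR N * K1 * D)) <= exp (- (INR N * K1 * outage_kernel alpha p be))).
    { destruct (Req_dec (outage_kernel alpha p be) D) as [->|Hne]; [lra|].
      left. apply exp_increasing, Ropp_lt_contravar, Rmult_lt_compat_l; lra. }
    lra.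
Qed.

End OutageConstraint.

(** * Throughput *)

Lemma K4_pos N L alpha p : (1 <= N)%nat -> 0 < p -> 0 < K4 N L alpha p.
Proof.
  intros HN Hp. assert (0 < INR N) by (apply lt_0_INR; lia).
  unfold K4. pose proof (exp_pos (alpha * ln (L / INR N))).
  apply Rdiv_lt_0_compat; [unfold Rpower|]; nra.
Qed.

Lemma P_c_eq N L alpha p Rt : 0 < p ->
  P_c N L alpha p Rt = exp (- K4 N L alpha p * (Rpower 2 Rt - 1)).
Proof. intro Hp. unfold P_c, K4. f_equal. field. lra. Qed.

Lemma Gamma_term_pos alpha lambda_e g : 0 < alpha -> 0 < lambda_e ->
  is_Gamma (2 / alpha + 1) g -> 0 < PI * lambda_e * g.
Proof.
  intros Ha Hlam Hg.
  assert (Hx : 0 < 2 / alpha + 1) by (pose proof (Rdiv_lt_0_compat 2 alpha ltac:(lra) Ha); lra).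
  pose proof (Gamma_pos _ _ Hx Hg). pose proof PI_RGT_0.
  apply Rmult_lt_0_compat; [apply Rmult_lt_0_compat|]; assumption.
Qed.

Section Throughput.

Variables (N : nat) (L alpha p K1 eps : R).
Hypotheses (HN : (1 <= N)%nat) (Hp : 0 < p).

Let Res := Re_star N alpha p K1 eps.
Let K := K4 N L alpha p.
Let U := U_fun N L alpha p K1 eps.

Lemma U_fun_eq_exp Rt : Res < Rt -> U Rt = exp (log_throughput Res K Rt + K) / INR N.
Proof.
  intro HRt. unfold U, U_fun, log_throughput. fold Res K. f_equal.
  replace (ln (Rt - Res) - K * Rpower 2 Rt + K) with (ln (Rt - Res) + - K * (Rpower 2 Rt - 1))
    by ring.
  rewrite exp_plus, exp_ln; lra.
Qed.

Lemma exp_shift_div_le a b : a <= b -> exp (a + K) / INR N <= exp (b + K) / INR N.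
Proof.
  intro Hab. assert (0 < INR N) by (apply lt_0_INR; lia).
  apply Rmult_le_compat_r; [left; apply Rinv_0_lt_compat; lra|].
  destruct (Req_dec a b) as [->|]; [lra|]. left. apply exp_increasing. lra.
Qed.

Lemma U_fun_quasi_concave : quasi_concave_on (fun Rt => Res < Rt) U.
Proof.
  pose proof (K4_pos N L alpha p HN Hp).
  apply (quasi_concave_of_concave_comp _ U (log_throughput Res K)
           (fun z => exp (z + K) / INR N)).
  - intros. apply log_throughput_concave; assumption.
  - exact exp_shift_div_le.
  - exact U_fun_eq_exp.
  - intros. apply convex_comb_gt; assumption.
Qed.

Lemma Res_lt_Rts : Res < Res + W0 (Rpower 2 (- Res) / K) / ln 2.
Proof.
  assert (0 < W0 (Rpower 2 (- Res) / K) / ln 2); [|lra].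
  apply Rdiv_lt_0_compat; [|exact ln2_pos].
  apply W0_pos_spec, Rdiv_lt_0_compat; [apply Rpower2_pos|apply K4_pos; assumption].
Qed.

Lemma U_fun_strict_max Rt : Res < Rt -> Rt <> Res + W0 (Rpower 2 (- Res) / K) / ln 2 ->
  U Rt < U (Res + W0 (Rpower 2 (- Res) / K) / ln 2).
Proof.
  intros HRt Hne. pose proof Res_lt_Rts as HRts. pose proof (K4_pos N L alpha p HN Hp).
  assert (0 < INR N) by (apply lt_0_INR; lia).
  rewrite !U_fun_eq_exp by assumption.
  apply Rmult_lt_compat_r; [apply Rinv_0_lt_compat; lra|]. apply exp_increasing.
  apply Rplus_lt_compat_r, log_throughput_strict_max; try assumption.
  apply log_throughput_slope_W0; assumption.
Qed.

(* For a fixed R_t, the throughput grows with R_s, which the outage constraint caps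
   at R_t - R_e^*. *)
Lemma U_NOFT_le_U_fun Rt Rs : Rs <= Rt - Res -> U_NOFT N L alpha p Rt Rs <= U Rt.
Proof.
  intro HRs. assert (0 < INR N) by (apply lt_0_INR; lia).
  unfold U, U_fun, U_NOFT. rewrite P_c_eq by exact Hp. fold Res K.
  rewrite (Rmult_comm (Rt - Res)).
  apply Rmult_le_compat_r; [left; apply Rinv_0_lt_compat; lra|].
  apply Rmult_le_compat_l; [left; apply exp_pos|exact HRs].
Qed.

Lemma U_NOFT_eq_U_fun Rt : U_NOFT N L alpha p Rt (Rt - Res) = U Rt.
Proof.
  assert (0 < INR N) by (apply lt_0_INR; lia).
  unfold U, U_fun, U_NOFT. rewrite P_c_eq by exact Hp. fold Res K. field. lra.
Qed.

End Throughput.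

Theorem theorem3 (N : nat) (L alpha p lambda_e eps g : R)
  (hN : (1 <= N)%nat) (hL : 0 < L) (halpha : 0 < alpha) (hp : 0 < p)
  (hlam : 0 < lambda_e) (heps : 0 < eps < 1)
  (hg : is_Gamma (2 / alpha + 1) g) :
  let K1 := PI * lambda_e * g in
  let Res := Re_star N alpha p K1 eps in
  let U := U_fun N L alpha p K1 eps in
  let Rss := W0 (Rpower 2 (- Res) / K4 N L alpha p) / ln 2 in
  let Rts := Res + Rss in
  quasi_concave_on (fun Rt => Res < Rt) U /\
  Res < Rts /\
  (forall Rt, Res < Rt -> Rt <> Rts -> U Rt < U Rts) /\
  (Rss <= Rts /\ 0 < Rss /\ P_so N alpha p K1 Rts Rss <= eps) /\
  (forall Rt Rs, Rs <= Rt -> 0 < Rs -> P_so N alpha p K1 Rt Rs <= eps ->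
     U_NOFT N L alpha p Rt Rs <= U_NOFT N L alpha p Rts Rss).
Proof.
  intros K1 Res U Rss Rts.
  pose proof (Gamma_term_pos alpha lambda_e g halpha hlam hg) as HK1. fold K1 in HK1.
  pose proof (Re_star_pos N alpha p K1 eps halpha hp) as HRes.
  pose proof (Res_lt_Rts N L alpha p K1 eps hN hp) as HRts.
  pose proof (U_fun_strict_max N L alpha p K1 eps hN hp) as Hmax.
  fold Res Rss Rts U in HRes, HRts, Hmax.
  split; [exact (U_fun_quasi_concave N L alpha p K1 eps hN hp)|].
  split; [exact HRts|]. split; [exact Hmax|].
  split; [split; [|split]|].
  - unfold Rts; lra.
  - unfold Rts in HRts; lra.
  - apply P_so_le_eps_iff; try assumption. unfold Rts, Res. lra.
  - intros Rt Rs _ HRs Hso.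
    apply P_so_le_eps_iff in Hso; try assumption. fold Res in Hso.
    replace Rss with (Rts - Res) by (unfold Rts; ring).
    rewrite (U_NOFT_eq_U_fun N L alpha p K1 eps hN hp). fold U.
    apply Rle_trans with (U Rt); [apply U_NOFT_le_U_fun; try assumption; fold Res; lra|].
    destruct (Req_dec Rt Rts) as [->|Hne]; [lra|].
    left. apply Hmax; [lra|exact Hne].
Qed.
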